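(* Let $d_{in}, d_K, d_V, M$ be positive integers, let $W_Q, W_K \in \mathbb{R}^{d_{in}\times d_K}$ and $W_V \in \mathbb{R}^{d_{in}\times d_V}$ be weight matrices, let $b_{KV}\in\mathbb{R}^{d_K\times d_V}$ be a bias matrix, and let $X'\in\mathbb{R}^{M\times d_{in}}$ be a fixed matrix (the in-context prompt, whose rows are tokens). For matrices $Q\in\mathbb{R}^{n\times d_K}$, $K\in\mathbb{R}^{n\times d_K}$, $V\in\mathbb{R}^{n\times d_V}$ and $b\in\mathbb{R}^{d_K\times d_V}$ define the linear attention with Key-Value bias $$\mathrm{LinAttn}(Q,K,V,b) = Q\,(K^{T}V + b)\in\mathbb{R}^{n\times d_V}.$$ Set $$b'_{KV} = b_{KV} + W_K^{T}X'^{T}X'W_V.$$ Then for every $N\ge 1$ and every $X\in\mathbb{R}^{N\times d_{in}}$, writing $[X';X]\in\mathbb{R}^{(M+N)\times d_{in}}$ for the row-wise concatenation of $X'$ followed by $X$, the last $N$ rows of $$\mathrm{LinAttn}([X';X]W_Q,\,[X';X]W_K,\,[X';X]W_V,\,b_{KV})$$ are equal to $$\mathrm{LinAttn}(XW_Q,\,XW_K,\,XW_V,\,b'_{KV}).$$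
   Context: Tokens are the rows of the matrices $X'$ and $X$; $[X';X]$ denotes stacking the rows of $X'$ on top of the rows of $X$. No causal mask and no positional encoding are used in this linear attention. *)

From mathcomp Require Import all_boot all_order all_algebra.
From mathcomp Require Import reals.
Set Implicit Arguments. Unset Strict Implicit. Unset Printing Implicit Defensive.
Import GRing.Theory Num.Theory.
Local Open Scope ring_scope.

Definition LinAttn (R : realType) (n dK dV : nat)
  (Q : 'M[R]_(n, dK)) (K : 'M[R]_(n, dK)) (V : 'M[R]_(n, dV)) (b : 'M[R]_(dK, dV))
  : 'M[R]_(n, dV) := Q *m (K^T *m V + b).

From mathcomp Require Import all_boot all_order all_algebra.
From mathcomp Require Import reals.
Import GRing.Theory.
Local Open Scope ring_scope.

(* Without a causal mask the key-value state K^T V is a sum over all tokens, so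
   the prompt rows contribute the constant K'^T V', which can be folded into
   the bias; and since queries act row by row, the last rows of the output only
   involve the queries of X. *)

Lemma mulmx_tr_col_mx (R : pzRingType) (m1 m2 n p : nat)
    (A1 : 'M[R]_(m1, n)) (A2 : 'M[R]_(m2, n))
    (B1 : 'M[R]_(m1, p)) (B2 : 'M[R]_(m2, p)) :
  (col_mx A1 A2)^T *m col_mx B1 B2 = A1^T *m B1 + A2^T *m B2.
Proof. by rewrite tr_col_mx mul_row_col. Qed.

Lemma dsubmx_LinAttn_col_mx (R : realType) (m n dK dV : nat)
    (Q' K' : 'M[R]_(m, dK)) (V' : 'M[R]_(m, dV))
    (Q K : 'M[R]_(n, dK)) (V : 'M[R]_(n, dV)) (b : 'M[R]_(dK, dV)) :
  dsubmx (LinAttn (col_mx Q' Q) (col_mx K' K) (col_mx V' V) b)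
  = LinAttn Q K V (b + K'^T *m V').
Proof.
rewrite /LinAttn mul_col_mx col_mxKd mulmx_tr_col_mx.
by rewrite addrAC addrC (addrC b).
Qed.

Theorem theorem4p1 (R : realType) (d_in dK dV M : nat)
  (hdin : (0 < d_in)%N) (hdK : (0 < dK)%N) (hdV : (0 < dV)%N) (hM : (0 < M)%N)
  (WQ WK : 'M[R]_(d_in, dK)) (WV : 'M[R]_(d_in, dV)) (bKV : 'M[R]_(dK, dV))
  (X' : 'M[R]_(M, d_in)) :
  let b'KV := bKV + WK^T *m X'^T *m X' *m WV in
  forall (N : nat), (0 < N)%N -> forall (X : 'M[R]_(N, d_in)),
    let XX := col_mx X' X in
    dsubmx (LinAttn (XX *m WQ) (XX *m WK) (XX *m WV) bKV)
    = LinAttn (X *m WQ) (X *m WK) (X *m WV) b'KV.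
Proof.
move=> b'KV N _ X XX.
have prompt_kv : (X' *m WK)^T *m (X' *m WV) = WK^T *m X'^T *m X' *m WV.
  by rewrite trmx_mul !mulmxA.
by rewrite /XX !mul_col_mx dsubmx_LinAttn_col_mx prompt_kv.
Qed.
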